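(* Every voting rule in the PJR-Exact family satisfies PJR: for every ballot profile $\mathcal{A}=(A_1,\dots,A_n)$ over a candidate set $C$ and every committee size $k\le |C|$, every committee $W$ that can be produced by a rule of the PJR-Exact family provides PJR for $(\mathcal{A},k)$.
   Context: Setting: voters $N=\{1,\dots,n\}$, candidates $C=\{c_1,\dots,c_m\}$, each voter $i$ submits an approval ballot $A_i\subseteq C$; $\mathcal{A}=(A_1,\dots,A_n)$; $k$ is a positive integer with $k\le |C|$. The exact quota is $q=n/k$. For $c\in C$, $N_c=\{i\in N: c\in A_i\}$. EJR/PJR: for $\ell\in\{1,\dots,k\}$, a set $N^*\subseteq N$ is $\ell$-cohesive if $|N^*|\ge \ell n/k$ and $|\bigcap_{i\in N^*}A_i|\ge \ell$. A committee $W\subseteq C$ with $|W|=k$ provides EJR (resp. PJR) for $(\mathcal{A},k)$ if for every $\ell\in\{1,\dots,k\}$ and every $\ell$-cohesive $N^*$ there is $i\in N^*$ with $|A_i\cap W|\ge \ell$ (resp. $|W\cap\bigcup_{i\in N^*}A_i|\ge \ell$). PJR-Exact family: a rule in this family is any iterative procedure that selects candidates $w_1,\dots,w_k$ one at a time, with $W_0=\emptyset$, $W_j=W_{j-1}\cup\{w_j\}$, $w_j\in C\setminus W_{j-1}$, output $W=W_k$, and maintains vote fractions $f_i^j$ ($i\in N$, $j=0,\dots,k$) with $f_i^0=1$, $0\le f_i^j\le f_i^{j-1}$, such that at every iteration $j$: (a) $f_i^j=f_i^{j-1}$ for $i\notin N_{w_j}$; (b) letting $s=\sum_{i\in N_{w_j}}f_i^{j-1}$,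 if $s>q$ then $\sum_{i\in N_{w_j}}(f_i^{j-1}-f_i^j)=q$, and if $s\le q$ then $f_i^j=0$ for all $i\in N_{w_j}$; (c) if some $c\in C\setminus W_{j-1}$ satisfies $\sum_{i\in N_c}f_i^{j-1}\ge q$, then $\sum_{i\in N_{w_j}}f_i^{j-1}\ge q$. All choices not constrained by (a)–(c) are arbitrary. *)

From HB Require Import structures.
From mathcomp Require Import all_boot all_order all_algebra.
Set Implicit Arguments. Unset Strict Implicit. Unset Printing Implicit Defensive.
Import Order.TTheory GRing.Theory Num.Theory.
Local Open Scope ring_scope.

Definition quota (R : realFieldType) (n k : nat) : R := n%:R / k%:R.

Definition supp_sum (R : realFieldType) (C : finType) (n : nat)
  (A : 'I_n -> {set C}) (c : C) (g : 'I_n -> R) : R :=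
  \sum_(i < n | c \in A i) g i.

(* The set W_j = {w_1,...,w_j} of the first j selected candidates
   (here w is 0-indexed: w t for t < j). *)
Definition prefix_set (C : finType) (k : nat) (w : 'I_k -> C) (j : nat) : {set C} :=
  [set w t | t : 'I_k & (t < j)%N].

(* A run of a rule in the PJR-Exact family: candidates w (injective,
   w t is the candidate chosen at iteration t+1) and vote fractions
   f j i = f_i^j for j = 0..k. *)
Definition pjr_exact_run (R : realFieldType) (C : finType) (n k : nat)
  (A : 'I_n -> {set C}) (w : 'I_k -> C) (f : nat -> 'I_n -> R) : Prop :=
  injective w /\
  (forall i, f 0%N i = 1) /\
  forall t : 'I_k,
    let j := nat_of_ord t in
    let wj := w t in
    let s := supp_sum A wj (f j) in
    (forall i, 0 <= f j.+1 i /\ f j.+1 i <= f j i) /\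
    (forall i, wj \notin A i -> f j.+1 i = f j i) /\
    (quota R n k < s ->
       \sum_(i < n | wj \in A i) (f j i - f j.+1 i) = quota R n k) /\
    (s <= quota R n k -> forall i, wj \in A i -> f j.+1 i = 0) /\
    ((exists c, c \notin prefix_set w j /\ quota R n k <= supp_sum A c (f j)) ->
       quota R n k <= s).

Definition provides_PJR (C : finType) (n : nat) (A : 'I_n -> {set C}) (k : nat)
  (W : {set C}) : Prop :=
  #|W| = k /\
  forall (l : nat) (Ns : {set 'I_n}),
    (1 <= l <= k)%N ->
    ((l * n)%:R / k%:R <= (#|Ns|%:R : rat)) ->
    (l <= #|\bigcap_(i in Ns) A i|)%N ->
    (l <= #|W :&: \bigcup_(i in Ns) A i|)%N.

From HB Require Import structures.
From mathcomp Require Import all_boot all_order all_algebra.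
From mathcomp Require Import lra.
Import Order.TTheory GRing.Theory Num.Theory.
Local Open Scope ring_scope.

(* Suppose an l-cohesive group N* sees fewer than l of its approved candidates
   elected.  A round removes at most q of N*'s vote fractions, and only when it
   elects a candidate approved by some member of N*, so N* keeps a total weight
   of at least |N*| - (l-1) q >= q throughout the run.  Some candidate approved
   by all of N* is never elected, and its support is at least N*'s weight, so
   rule (c) forces every round to spend exactly q.  After k rounds the whole
   weight n = k q is spent, contradicting the weight >= q > 0 left to N*. *)

Lemma quota_gt0 (R : realFieldType) (n k : nat) :
  (0 < n)%N -> (0 < k)%N -> 0 < quota R n k.
Proof. by move=> n_gt0 k_gt0; rewrite divr_gt0 ?ltr0n. Qed.

Lemma quotaK (R : realFieldType) (n k : nat) :
  (0 < k)%N -> quota R n k * k%:R = n%:R.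
Proof. by move=> k_gt0; rewrite divfK // pnatr_eq0 -lt0n. Qed.

Lemma cohesive_quota (R : realFieldType) {n k l m : nat} : (0 < k)%N ->
  (l * n)%:R / k%:R <= m%:R :> rat -> l%:R * quota R n k <= m%:R :> R.
Proof.
move=> k_gt0; rewrite ler_pdivrMr ?ltr0n // -natrM ler_nat => lnmk.
by rewrite mulrA ler_pdivrMr ?ltr0n // -!natrM ler_nat.
Qed.

Lemma ler_sum_sub (R : numDomainType) (I : finType) (P Q : pred I) (F : I -> R) :
  (forall i, P i -> Q i) -> (forall i, 0 <= F i) ->
  \sum_(i | P i) F i <= \sum_(i | Q i) F i.
Proof.
move=> PQ F_ge0; rewrite [X in X <= _]big_mkcond [X in _ <= X]big_mkcond.
apply: ler_sum => i _; case: (boolP (P i)) => [/PQ -> //|_].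
by case: (Q i).
Qed.

Lemma subset_card_setI_lt (T : finType) (W U X : {set T}) :
  X \subset U -> (#|W :&: U| < #|X|)%N -> exists2 c, c \in X & c \notin W.
Proof.
move=> XU WU_lt; apply/exists_inP; rewrite -negb_forall_in; apply/negP.
move/forall_inP => XW; move: WU_lt; rewrite ltnNge subset_leq_card //.
by apply/subsetP => x Xx; rewrite inE XW ?(subsetP XU).
Qed.

Section PrefixSet.

Variables (C : finType) (k : nat) (w : 'I_k -> C).

Lemma prefix_set0 : prefix_set w 0 = set0.
Proof. by apply/setP => c; rewrite inE; apply/imsetP => -[t]; rewrite inE. Qed.

Lemma prefix_setS (t : 'I_k) : prefix_set w t.+1 = w t |: prefix_set w t.
Proof.
apply/setP => c; rewrite !inE; apply/imsetP/idP => [[s]|].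
  rewrite inE ltnS leq_eqVlt => /orP[/eqP/val_inj -> -> |s_lt ->].
    by rewrite eqxx.
  by apply/orP; right; apply/imsetP; exists s; rewrite ?inE.
case/orP => [/eqP ->|/imsetP[s]]; first by exists t; rewrite ?inE.
by rewrite inE => s_lt ->; exists s; rewrite // inE ltnS ltnW.
Qed.

Lemma prefix_set_sub (j : nat) : prefix_set w j \subset [set w t | t : 'I_k].
Proof. by apply/subsetP => _ /imsetP[t _ ->]; apply: imset_f. Qed.

Lemma prefix_set_notin (t : 'I_k) : injective w -> w t \notin prefix_set w t.
Proof. by move=> w_inj; apply/imsetP => -[s]; rewrite inE => + /w_inj st; rewrite st ltnn. Qed.

End PrefixSet.

Section PJRExactRun.

Context {R : realFieldType} {C : finType} {n k : nat}.
Context {A : 'I_n -> {set C}} {w : 'I_k -> C} {f : nat -> 'I_n -> R}.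
Hypotheses (n_gt0 : (0 < n)%N) (k_gt0 : (0 < k)%N).
Hypothesis run : pjr_exact_run A w f.

Local Notation q := (quota R n k).

Lemma run_f0 i : f 0 i = 1.
Proof. by case: run => _ []. Qed.

Lemma run_ge0 j i : (j <= k)%N -> 0 <= f j i.
Proof.
case: j => [_|j j_lt]; first by rewrite run_f0.
by have [/(_ i)[]] := run.2.2 (Ordinal j_lt).
Qed.

Lemma run_drop_ge0 (t : 'I_k) i : 0 <= f t i - f t.+1 i.
Proof. by have [/(_ i)[_]] := run.2.2 t; rewrite subr_ge0. Qed.

Lemma run_unsupported (t : 'I_k) i : w t \notin A i -> f t.+1 i = f t i.
Proof. by have [_ [unsupp _]] := run.2.2 t; apply: unsupp. Qed.

Lemma run_spent_le (t : 'I_k) : \sum_(i | w t \in A i) (f t i - f t.+1 i) <= q.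
Proof.
have [_ [_ [spent_gt [spent_le _]]]] := run.2.2 t.
case: (ltrP q (supp_sum A (w t) (f t))) => [/spent_gt -> //|s_le].
by rewrite (eq_bigr (f t)) // => i /(spent_le s_le) ->; rewrite subr0.
Qed.

Lemma run_spent_eq (t : 'I_k) : q <= supp_sum A (w t) (f t) ->
  \sum_(i | w t \in A i) (f t i - f t.+1 i) = q.
Proof.
have [_ [_ [spent_gt [spent_le _]]]] := run.2.2 t => q_le.
case: (ltrP q (supp_sum A (w t) (f t))) => [/spent_gt -> //|s_le].
rewrite (eq_bigr (f t)) => [|i /(spent_le s_le) ->]; last by rewrite subr0.
by apply/eqP; rewrite eq_le s_le.
Qed.

Lemma run_sum_drop (t : 'I_k) (P : {pred 'I_n}) :
  \sum_(i in P) f t i - \sum_(i in P) f t.+1 i =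
  \sum_(i in P | w t \in A i) (f t i - f t.+1 i).
Proof.
rewrite -sumrB (bigID (fun i => w t \in A i)) /= [X in _ + X]big1 ?addr0 //.
by move=> i /andP[_ /run_unsupported ->]; rewrite subrr.
Qed.

Lemma run_sum_drop_le (t : 'I_k) (P : {pred 'I_n}) :
  \sum_(i in P) f t i - \sum_(i in P) f t.+1 i <= q.
Proof.
rewrite run_sum_drop; apply: le_trans (run_spent_le t).
by apply: ler_sum_sub => [i /andP[]|i] //; apply: run_drop_ge0.
Qed.

Lemma run_total_sum j : (forall t : 'I_k, q <= supp_sum A (w t) (f t)) ->
  (j <= k)%N -> \sum_i f j i = n%:R - q * j%:R.
Proof.
move=> full; elim: j => [_|j IH j_lt].
  by rewrite mulr0 subr0 (eq_bigr (fun=> 1)) ?sumr_const ?card_ord // => i _; rewrite run_f0.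
set t := Ordinal j_lt; have := run_sum_drop t predT.
under [in X in _ = X]eq_bigl do rewrite inE /=.
rewrite run_spent_eq // IH 1?ltnW // -addn1 natrD; lra.
Qed.

Section CohesiveGroup.

Variable Ns : {set 'I_n}.

Local Notation U := (\bigcup_(i in Ns) A i).

Lemma run_group_sum_lower j : (j <= k)%N ->
  #|Ns|%:R - q * #|prefix_set w j :&: U|%:R <= \sum_(i in Ns) f j i.
Proof.
elim: j => [_|j IH j_lt].
  rewrite prefix_set0 set0I cards0 mulr0 subr0 (eq_bigr (fun=> 1)) ?sumr_const //.
  by move=> i _; rewrite run_f0.
set t := Ordinal j_lt; have := IH (ltnW j_lt).
have -> : prefix_set w j.+1 = w t |: prefix_set w j by exact: prefix_setS t.
case: (boolP (w t \in U)) => wtU.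
  have wt_new : w t \notin prefix_set w j by exact: prefix_set_notin t run.1.
  have -> : (w t |: prefix_set w j) :&: U = w t |: (prefix_set w j :&: U).
    by rewrite setIUl (setIidPl _) // sub1set.
  have := run_sum_drop_le t Ns.
  rewrite cardsU1 inE (negPf wt_new) natrD /=; lra.
have -> : (w t |: prefix_set w j) :&: U = prefix_set w j :&: U.
  by apply/setP => c; rewrite !inE; case: eqVneq => [->|] //=; rewrite (negPf wtU) andbF.
rewrite [X in _ -> _ <= X](eq_bigr (f j)) // => i i_in; apply: (run_unsupported t).
by apply: contra wtU => wt_in; apply/bigcupP; exists i.
Qed.

Lemma run_group_sum_ge_quota (l : nat) :
  (#|[set w t | t : 'I_k] :&: U| < l)%N -> l%:R * q <= #|Ns|%:R ->
  forall j, (j <= k)%N -> q <= \sum_(i in Ns) f j i.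
Proof.
move=> WU_lt cohesive j j_le; apply: le_trans (run_group_sum_lower _ j_le).
have prefix_lt : (#|prefix_set w j :&: U| + 1 <= l)%N.
  by rewrite addn1; apply: leq_ltn_trans WU_lt; rewrite subset_leq_card // setSI // prefix_set_sub.
have q_gt0 : 0 < q by exact: quota_gt0.
move: prefix_lt; rewrite -(ler_nat R) natrD => prefix_lt.
have : q * #|prefix_set w j :&: U|%:R <= q * (l%:R - 1).
  by apply: ler_wpM2l; [exact: ltW | lra].
lra.
Qed.

Lemma run_cohesive_group_represented (l : nat) : (0 < l)%N ->
  l%:R * q <= #|Ns|%:R -> (l <= #|\bigcap_(i in Ns) A i|)%N ->
  (l <= #|[set w t | t : 'I_k] :&: U|)%N.
Proof.
move=> l_gt0 cohesive common_ge; rewrite leqNgt; apply/negP => WU_lt.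
have q_gt0 : 0 < q by exact: quota_gt0.
have group_ge := run_group_sum_ge_quota _ WU_lt cohesive.
have [i0 i0_in] : exists i0, i0 \in Ns.
  apply/set0Pn; rewrite -card_gt0 -(ltr_nat R); apply: lt_le_trans cohesive.
  by rewrite mulr_gt0 ?ltr0n.
have [c c_common c_out] : exists2 c, c \in \bigcap_(i in Ns) A i & c \notin [set w t | t : 'I_k].
  apply: subset_card_setI_lt (leq_trans WU_lt common_ge).
  by apply/subsetP => c /bigcapP c_in; apply/bigcupP; exists i0; rewrite // c_in.
have full t : q <= supp_sum A (w t) (f t).
  have [_ [_ [_ [_ by_rule_c]]]] := run.2.2 t; apply: by_rule_c; exists c; split.
    by apply: contra c_out; apply/subsetP/prefix_set_sub.
  apply: le_trans (group_ge _ (ltnW (ltn_ord t))) _.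
  rewrite /supp_sum (eq_bigl (fun i => (i \in Ns) && (c \in A i))).
    by apply: ler_sum_sub => [i /andP[]|i] //; apply/run_ge0/ltnW.
  by move=> i; case: (boolP (i \in Ns)) => //= /(bigcapP c_common) ->.
have spent := run_total_sum k full (leqnn k); rewrite quotaK // subrr in spent.
have : \sum_(i in Ns) f k i <= \sum_i f k i.
  by apply: ler_sum_sub => // i; apply: run_ge0.
have := group_ge k (leqnn k); lra.
Qed.

End CohesiveGroup.

End PJRExactRun.

Theorem mainTheorem1 (R : realFieldType) (C : finType) (n k : nat)
  (A : 'I_n -> {set C}) (w : 'I_k -> C) (f : nat -> 'I_n -> R) :
  (0 < n)%N -> (0 < k)%N -> (k <= #|C|)%N ->
  pjr_exact_run A w f ->
  provides_PJR A k [set w t | t : 'I_k].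
Proof.
move=> n_gt0 k_gt0 _ run; split; first by rewrite card_imset ?card_ord //; case: run.
move=> l Ns /andP[l_gt0 _] cohesive common_ge.
have cohesive_R := cohesive_quota R k_gt0 cohesive.
exact: run_cohesive_group_represented n_gt0 k_gt0 run Ns l l_gt0 cohesive_R common_ge.
Qed.
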